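(* Assume $\hat\omega$ lies in the interior of $\mathbb{P}_\Omega$ (all $\hat\omega_i>0$). The vertex-direction iteration with step sizes $\alpha_n=1/(n+1)$, initialized at any $\omega^{(1)}\in\mathbb{P}_\Omega$, satisfies $$\|\omega^{(n)}-\hat\omega\|_{\mathbf K}^2\le 4R_*^2\Big(1+\frac{R_*^2}{\alpha_*^2}\Big)\frac1{n^2},\qquad n\ge1,$$ where $R_*=[\lambda_{\max}(\mathbf K)(1-1/\Omega)]^{1/2}$, $\alpha_*=w_*/L$, $w_*=\min_i\hat\omega_i$ and $L=(\max_i\{\mathbf K^{-1}\}_{ii})^{1/2}$.
   Context: $\mathbf K$ is a real symmetric positive definite $\Omega\times\Omega$ matrix ($\Omega\ge2$) with largest eigenvalue $\lambda_{\max}(\mathbf K)$; $\|u\|_{\mathbf K}^2=u^T\mathbf K u$. $e_i$ is the $i$-th canonical basis vector of $\mathbb{R}^\Omega$ and $\mathbb{P}_\Omega=\{\omega\in\mathbb{R}^\Omega:\omega_i\ge0,\sum_i\omega_i=1\}$. The vertex-direction iteration is $\omega^{(n+1)}=\omega^{(n)}+\alpha_n(e_{i_n^+}-\omega^{(n)})$ with $i_n^+\in\arg\min_{i=1,\dots,\Omega}e_i^T\mathbf K(\omega^{(n)}-\hat\omega)$. *)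

From HB Require Import structures.
From mathcomp Require Import all_boot all_order all_algebra.
Set Implicit Arguments. Unset Strict Implicit. Unset Printing Implicit Defensive.
Import Order.TTheory GRing.Theory Num.Theory.
Local Open Scope ring_scope.

Definition sym_posdef (R : realFieldType) (n : nat) (K : 'M[R]_n) : Prop :=
  K^T = K /\ forall u : 'cV[R]_n, u != 0 -> 0 < (u^T *m K *m u) 0 0.

Definition is_lambda_max (R : realFieldType) (n : nat) (K : 'M[R]_n) (l : R) : Prop :=
  eigenvalue K l /\ forall b, eigenvalue K b -> b <= l.

Definition normK2 (R : realFieldType) (n : nat) (K : 'M[R]_n) (u : 'cV[R]_n) : R :=
  (u^T *m K *m u) 0 0.

Definition in_simplex (R : realFieldType) (n : nat) (w : 'cV[R]_n) : Prop :=
  (forall i, 0 <= w i 0) /\ \sum_i w i 0 = 1.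

Definition e_vec (R : realFieldType) (n : nat) (i : 'I_n) : 'cV[R]_n := delta_mx i 0.

Definition min_coord (R : realFieldType) (n : nat) (u : 'cV[R]_n.+1) : R :=
  \big[Num.min/u ord0 0]_i u i 0.
Definition max_diag (R : realFieldType) (n : nat) (A : 'M[R]_n.+1) : R :=
  \big[Num.max/A ord0 ord0]_i A i i.

From HB Require Import structures.
From mathcomp Require Import all_boot all_order all_algebra.
From mathcomp Require Import complex ring lra.
Import Order.TTheory GRing.Theory Num.Theory.
Local Open Scope ring_scope.

(** Write d_k = omega^(k) - what and N_k = ||d_k||_K^2.  With step 1/(k+1),
    (k+1) d_(k+1) = k d_k + (e_(i_k) - what), hence
      (k+1)^2 N_(k+1) = k^2 N_k - 2 k G_k + ||e_(i_k) - what||_K^2,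
    where G_k = <what - e_(i_k), K d_k> is the duality gap.  The last term is at
    most 2 lambda_max, since two points of the simplex are at squared Euclidean
    distance at most 2.  As what is interior and |d_j| <= L ||d||_K (Cauchy-Schwarz
    against K^-1 e_j), the point what - (w_star/(L sqrt N_k)) d_k still lies in the
    simplex, so the minimality of i_k yields G_k >= alpha_star sqrt N_k.  Thus
    q_k = k sqrt N_k obeys q_(k+1)^2 <= q_k^2 - 2 alpha_star q_k + 2 lambda_max, which
    keeps q_k^2 below 2 lambda_max + (lambda_max/alpha_star)^2 <= 4 R_star^2 (1 + R_star^2/alpha_star^2). *)

Section RayleighBound.
Context {R : rcfType} {n : nat} {K : 'M[R]_n} {l : R}.
Hypotheses (K_sym : K^T = K) (eigenvalue_le : forall b, eigenvalue K b -> b <= l).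

(* The spectral theorem is only available over a numClosedFieldType, so K is
   viewed as a Hermitian matrix over R[i]. *)
Local Notation toC := (real_complex R).

Let conj_toC (x : R) : (toC x)^* = toC x.
Proof. by apply/conj_Creal/complex_realP; exists x. Qed.

Let KC := map_mx toC K.

Let KC_herm : KC \is hermsymmx.
Proof.
apply/is_hermitianmxP; rewrite expr0 scale1r.
by apply/matrixP => i j; rewrite !mxE conj_toC -[in LHS]K_sym mxE.
Qed.

Let spectral_diag_le k : exists2 a : R, spectral_diag KC 0 k = toC a & a <= l.
Proof.
have /orthomx_spectralP KC_eq := hermitian_normalmx KC_herm.
have P_unitary := spectral_unitarymx KC.
set P := spectralmx KC in KC_eq P_unitary; set D := spectral_diag KC in KC_eq *.
have PPt : (P *m P^t* )%sesqui = 1%:M by apply/unitarymxP.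
have /complex_realP [a Da] := mxOverP (hermitian_spectral_diag_real KC_herm) 0 k.
exists a => //; apply: eigenvalue_le.
suff : eigenvalue KC (D 0 k).
  by rewrite Da !eigenvalue_root_char -map_char_poly fmorph_root.
apply/eigenvalueP; exists (row k P).
  rewrite -row_mul KC_eq invmx_unitary // !mulmxA PPt mul1mx.
  by rewrite row_mul row_diag_mx -scalemxAl -rowE.
apply/negP => /eqP Pk0.
have := congr1 (row k) PPt; rewrite row_mul Pk0 mul0mx => /rowP /(_ k).
by rewrite !mxE eqxx /= => /eqP; rewrite eq_sym oner_eq0.
Qed.

Lemma quad_form_le_lambda (v : 'cV[R]_n) :
  (v^T *m K *m v) 0 0 <= l * (v^T *m v) 0 0.
Proof.
have /orthomx_spectralP KC_eq := hermitian_normalmx KC_herm.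
have P_unitary := spectral_unitarymx KC.
set P := spectralmx KC in KC_eq P_unitary; set D := spectral_diag KC in KC_eq.
have PtP : (P^t* *m P)%sesqui = 1%:M by apply/mulmx1C/unitarymxP.
pose x := map_mx toC v^T.
have x_adj : (x^t* )%sesqui = map_mx toC v.
  by apply/matrixP => i j; rewrite !mxE conj_toC.
pose y := x *m (P^t* )%sesqui.
have y_adj : (y^t* )%sesqui = P *m (x^t* )%sesqui.
  by rewrite /y trmx_mul map_mxM trmxCK.
have quadKE : toC ((v^T *m K *m v) 0 0) = (y *m diag_mx D *m (y^t* )%sesqui) 0 0.
  have -> : toC ((v^T *m K *m v) 0 0) = (x *m KC *m (x^t* )%sesqui) 0 0.
    by rewrite x_adj -!map_mxM [in RHS]mxE.
  by rewrite KC_eq invmx_unitary // y_adj /y !mulmxA.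
have quadE : toC ((v^T *m v) 0 0) = (y *m (y^t* )%sesqui) 0 0.
  by rewrite y_adj /y -mulmxA (mulmxA _ P) PtP mul1mx x_adj -map_mxM [in RHS]mxE.
rewrite -(lecR (R:=R)) rmorphM /= quadKE quadE mul_mx_diag !mxE mulr_sumr.
rewrite -subr_ge0 -sumrB; apply: sumr_ge0 => j _; rewrite mxE.
have -> : (y^t* )%sesqui j 0 = (y 0 j)^* by rewrite !mxE.
have [a -> a_le] := spectral_diag_le j; move: (y 0 j) => z.
rewrite mulrAC [_ * toC a]mulrC -mulrBl; apply: mulr_ge0; last by rewrite mul_conjC_ge0.
by rewrite subr_ge0 lecR.
Qed.

End RayleighBound.

Lemma weighted_sum_ge_min {R : numDomainType} {n : nat} (u g : 'cV[R]_n) i0 :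
  (forall j, 0 <= u j 0) -> (forall j, g i0 0 <= g j 0) ->
  (\sum_j u j 0) * g i0 0 <= \sum_j u j 0 * g j 0.
Proof.
by move=> u_ge0 g_min; rewrite mulr_suml; apply: ler_sum => j _; apply: ler_wpM2l.
Qed.

Definition formK {R : pzSemiRingType} {n : nat} (K : 'M[R]_n) (u v : 'cV[R]_n) : R :=
  (u^T *m K *m v) 0 0.

Section PosDefForm.
Context {R : rcfType} {n : nat} {K : 'M[R]_n}.
Hypotheses (K_sym : K^T = K) (K_pos : forall u, u != 0 -> 0 < normK2 K u).

Lemma formKC u v : formK K u v = formK K v u.
Proof.
rewrite /formK (_ : u^T *m K *m v = (v^T *m K *m u)^T) ?mxE //.
by rewrite !trmx_mul trmxK K_sym mulmxA.
Qed.

Lemma formKE u v : formK K u v = \sum_j u j 0 * (K *m v) j 0.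
Proof. by rewrite /formK -mulmxA mxE; apply: eq_bigr => j _; rewrite mxE. Qed.

Lemma formK_e_vec i v : formK K (e_vec R i) v = (K *m v) i 0.
Proof. by rewrite /formK /e_vec trmx_delta -mulmxA -rowE mxE. Qed.

Lemma formKDl u v w : formK K (u + v) w = formK K u w + formK K v w.
Proof. by rewrite /formK linearD /= !mulmxDl mxE. Qed.

Lemma formKZl a u v : formK K (a *: u) v = a * formK K u v.
Proof. by rewrite /formK linearZ /= -!scalemxAl mxE. Qed.

Lemma formKBl u v w : formK K (u - v) w = formK K u w - formK K v w.
Proof. by rewrite formKDl -scaleN1r formKZl mulN1r. Qed.

Lemma normK2E u : normK2 K u = formK K u u.
Proof. by []. Qed.

Lemma normK2_ge0 u : 0 <= normK2 K u.
Proof.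
have [->|/K_pos/ltW //] := eqVneq u 0.
by rewrite /normK2 mulmx0 mxE.
Qed.

Lemma normK2D u v : normK2 K (u + v) = normK2 K u + 2 * formK K u v + normK2 K v.
Proof.
rewrite !normK2E formKDl ![formK K _ (u + v)]formKC !formKDl (formKC u v).
by ring.
Qed.

Lemma normK2Z a u : normK2 K (a *: u) = a ^+ 2 * normK2 K u.
Proof. by rewrite !normK2E formKZl formKC formKZl mulrA -expr2. Qed.

Lemma formK_sqr_le u v : formK K u v ^+ 2 <= normK2 K u * normK2 K v.
Proof.
have [->|v_neq0] := eqVneq v 0.
  by rewrite /formK /normK2 !mulmx0 !mxE expr0n /= mulr0.
have N_gt0 := K_pos _ v_neq0.
have := normK2_ge0 (normK2 K v *: u - formK K u v *: v).
rewrite normK2D normK2Z -scaleNr normK2Z formKZl formKC formKZl formKC.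
move=> H; rewrite -subr_ge0 -(pmulr_rge0 _ N_gt0); move: H.
by congr (0 <= _); ring.
Qed.

Lemma posdef_unitmx : K \in unitmx.
Proof.
rewrite unitmxE unitfE; apply/negP => /det0P [v v_neq0 vK0].
suff /K_pos : v^T != 0 by rewrite /normK2 trmxK vK0 mul0mx mxE ltxx.
by rewrite trmx_eq0.
Qed.

Lemma invmx_diag_normK2 j : invmx K j j = normK2 K (invmx K *m e_vec R j).
Proof.
rewrite /normK2 trmx_mul trmx_inv K_sym !mulmxA mulmxKV ?posdef_unitmx //.
by rewrite /e_vec trmx_delta -rowE -colE !mxE.
Qed.

Lemma invmx_diag_gt0 j : 0 < invmx K j j.
Proof.
rewrite invmx_diag_normK2; apply: K_pos; apply/negP => /eqP KVe0.
have := congr1 (mulmx K) KVe0; rewrite mulKVmx ?posdef_unitmx // mulmx0.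
by move=> /matrixP /(_ j 0); rewrite !mxE !eqxx /= => /eqP; rewrite oner_eq0.
Qed.

Lemma coord_sqr_le (d : 'cV[R]_n) j : d j 0 ^+ 2 <= invmx K j j * normK2 K d.
Proof.
have -> : d j 0 = formK K (invmx K *m e_vec R j) d.
  by rewrite formKC /formK -mulmxA mulKVmx ?posdef_unitmx // /e_vec -colE !mxE.
by rewrite invmx_diag_normK2; apply: formK_sqr_le.
Qed.

Lemma coord_le_sqrt_normK2 (d : 'cV[R]_n) (L : R) j :
  0 <= L -> invmx K j j <= L ^+ 2 -> d j 0 <= L * Num.sqrt (normK2 K d).
Proof.
move=> L_ge0 invK_le; apply: le_trans (ler_norm _) _.
rewrite -sqrtr_sqr -[L]ger0_norm // -sqrtr_sqr -sqrtrM ?sqr_ge0 //.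
rewrite ler_wsqrtr // (le_trans (coord_sqr_le d j)) // ler_wpM2r //.
exact: normK2_ge0.
Qed.

Lemma dual_gap_ge (w d : 'cV[R]_n) (ws L : R) i0 :
  \sum_j d j 0 = 0 -> \sum_j w j 0 = 1 -> (forall j, ws <= w j 0) ->
  0 < ws -> 0 < L -> (forall j, invmx K j j <= L ^+ 2) ->
  (forall j, (K *m d) i0 0 <= (K *m d) j 0) ->
  ws / L * Num.sqrt (normK2 K d) <= formK K w d - (K *m d) i0 0.
Proof.
move=> d_sum0 w_sum1 ws_le ws_gt0 L_gt0 invK_le i0_min.
have w_ge0 j : 0 <= w j 0 by apply: le_trans (ws_le j); apply: ltW.
have gap_ge0 : 0 <= formK K w d - (K *m d) i0 0.
  by rewrite subr_ge0 formKE -[leLHS]mul1r -w_sum1; apply: weighted_sum_ge_min.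
set t := Num.sqrt (normK2 K d).
have [t0|t_neq0] := eqVneq t 0; first by rewrite t0 mulr0.
have t_gt0 : 0 < t by rewrite lt_def t_neq0 sqrtr_ge0.
(* [w - c d] stays in the simplex: [c d_j <= c L t = ws <= w_j]. *)
set c := ws / (L * t).
have c_ge0 : 0 <= c by rewrite divr_ge0 ?mulr_ge0 ?ltW.
have cLt : c * (L * t) = ws by rewrite divfK // mulf_neq0 ?gt_eqF.
have u_ge0 j : 0 <= (w - c *: d) j 0.
  rewrite !mxE subr_ge0 (le_trans _ (ws_le j)) //.
  by rewrite -[leRHS]cLt ler_wpM2l // coord_le_sqrt_normK2 // ltW.
have u_sum1 : \sum_j (w - c *: d) j 0 = 1.
  under eq_bigr => j _ do rewrite !mxE.
  by rewrite sumrB -mulr_sumr w_sum1 d_sum0 mulr0 subr0.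
have := weighted_sum_ge_min _ _ _ u_ge0 i0_min.
rewrite u_sum1 mul1r -formKE formKBl formKZl -normK2E -[normK2 K d]sqr_sqrtr.
  have -> : c * t ^+ 2 = ws / L * t by rewrite /c; field; rewrite t_neq0 gt_eqF.
  lra.
exact: normK2_ge0.
Qed.

End PosDefForm.

Lemma simplex_coord_le1 {R : realFieldType} {n : nat} {a : 'cV[R]_n} (j : 'I_n) :
  in_simplex a -> a j 0 <= 1.
Proof.
move=> [a_ge0 <-]; rewrite (bigD1 j) //= lerDl.
by apply: sumr_ge0 => i _; apply: a_ge0.
Qed.

Lemma simplex_sqdist_le2 {R : realFieldType} {n : nat} {a b : 'cV[R]_n} :
  in_simplex a -> in_simplex b -> \sum_j (a j 0 - b j 0) ^+ 2 <= 2.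
Proof.
move=> a_simplex b_simplex; apply: (@le_trans _ _ (\sum_j (a j 0 + b j 0))).
  apply: ler_sum => j _.
  have := simplex_coord_le1 j a_simplex; have := simplex_coord_le1 j b_simplex.
  have := a_simplex.1 j; have := b_simplex.1 j; nra.
by rewrite big_split /= a_simplex.2 b_simplex.2.
Qed.

Lemma e_vec_simplex {R : realFieldType} {n : nat} (i : 'I_n) : in_simplex (e_vec R i).
Proof.
split=> [j|]; first by rewrite mxE ler0n.
rewrite (bigD1 i) //= mxE !eqxx big1 ?addr0 // => j /negbTE j_neq_i.
by rewrite mxE j_neq_i.
Qed.

Lemma normK2_simplex_sub_le {R : rcfType} {n : nat} {K : 'M[R]_n} {l : R}
    {a b : 'cV[R]_n} :
  K^T = K -> (forall c, eigenvalue K c -> c <= l) -> 0 <= l ->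
  in_simplex a -> in_simplex b -> normK2 K (a - b) <= 2 * l.
Proof.
move=> K_sym eigenvalue_le l_ge0 a_simplex b_simplex.
apply: le_trans (quad_form_le_lambda K_sym eigenvalue_le _) _.
rewrite mulrC ler_wpM2r // mxE (eq_bigr (fun j => (a j 0 - b j 0) ^+ 2)).
  exact: simplex_sqdist_le2.
by move=> j _; rewrite !mxE expr2.
Qed.

Lemma lambda_max_gt0 {R : rcfType} {n : nat} {K : 'M[R]_n.+1} {l : R} :
  K^T = K -> (forall u, u != 0 -> 0 < normK2 K u) ->
  (forall b, eigenvalue K b -> b <= l) -> 0 < l.
Proof.
move=> K_sym K_pos eigenvalue_le.
have e0_neq0 : e_vec R (0 : 'I_n.+1) != 0.
  by apply/negP => /eqP/matrixP/(_ 0 0); rewrite !mxE !eqxx => /eqP; rewrite oner_eq0.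
apply: lt_le_trans (K_pos _ e0_neq0) _.
apply: le_trans (quad_form_le_lambda K_sym eigenvalue_le _) _.
by rewrite /e_vec trmx_delta -rowE !mxE !eqxx /= mulr1.
Qed.

Lemma descent_step {R : realFieldType} (q h V l a : R) :
  0 <= q -> 0 < a -> a * q <= h -> V <= 2 * l ->
  q ^+ 2 <= 2 * l + (l / a) ^+ 2 -> q ^+ 2 - 2 * h + V <= 2 * l + (l / a) ^+ 2.
Proof.
move=> q_ge0 a_gt0 aq_le V_le q2_le.
have aq_ge0 : 0 <= a * q by apply: mulr_ge0 => //; apply: ltW.
have [l_le_aq|aq_lt_l] := lerP l (a * q); first lra.
have q_le : q <= l / a by rewrite ler_pdivlMr // mulrC ltW.
have : q ^+ 2 <= (l / a) ^+ 2 by rewrite ler_pXn2r ?nnegrE // (le_trans q_ge0).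
lra.
Qed.

Lemma descent_bound_le {R : realFieldType} (l r a : R) :
  0 <= l -> l <= 2 * r -> 2 * l + (l / a) ^+ 2 <= 4 * r * (1 + r / a ^+ 2).
Proof.
move=> l_ge0 l_le; rewrite expr_div_n.
have b_ge0 : 0 <= (a ^+ 2)^-1 by rewrite invr_ge0 sqr_ge0.
have : l ^+ 2 * (a ^+ 2)^-1 <= 4 * r ^+ 2 * (a ^+ 2)^-1 by apply: ler_wpM2r; nra.
move: b_ge0; set b := (a ^+ 2)^-1; nra.
Qed.

Lemma le_twice_sub_inv {R : realFieldType} {l : R} (N : nat) :
  0 <= l -> (2 <= N)%N -> l <= 2 * (l * (1 - N%:R^-1)).
Proof.
move=> l_ge0 N_ge2.
have : N%:R^-1 <= 2^-1 :> R.
  by rewrite lef_pV2 ?posrE ?ltr0n ?ler_nat // (leq_trans _ N_ge2).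
nra.
Qed.

Lemma min_coord_le {R : realFieldType} {n : nat} (u : 'cV[R]_n.+1) j :
  min_coord u <= u j 0.
Proof. exact: bigmin_le. Qed.

Lemma min_coord_gt0 {R : realFieldType} {n : nat} {u : 'cV[R]_n.+1} :
  (forall j, 0 < u j 0) -> 0 < min_coord u.
Proof.
move=> u_gt0; rewrite /min_coord; elim/big_ind: _ => // x y x_gt0 y_gt0.
by rewrite lt_min x_gt0 y_gt0.
Qed.

Lemma max_diag_ge {R : realFieldType} {n : nat} (A : 'M[R]_n.+1) j :
  A j j <= max_diag A.
Proof. exact: (@le_bigmax _ R _ _ (fun i => A i i)). Qed.

Section VertexDirection.
Context {R : rcfType} {n : nat} {K : 'M[R]_n} {l : R} {what : 'cV[R]_n}
  {omega : nat -> 'cV[R]_n} {idx : nat -> 'I_n} {ws L : R}.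
Hypotheses (K_sym : K^T = K) (K_pos : forall u, u != 0 -> 0 < normK2 K u)
  (eigenvalue_le : forall b, eigenvalue K b -> b <= l) (l_ge0 : 0 <= l).
Hypotheses (what_simplex : in_simplex what) (ws_gt0 : 0 < ws)
  (ws_le : forall j, ws <= what j 0).
Hypotheses (L_gt0 : 0 < L) (invK_le : forall j, invmx K j j <= L ^+ 2).
Hypotheses (omega1_simplex : in_simplex (omega 1))
  (idx_min : forall k, (1 <= k)%N -> forall j,
     formK K (e_vec R (idx k)) (omega k - what) <=
     formK K (e_vec R j) (omega k - what))
  (omega_rec : forall k, (1 <= k)%N ->
     omega k.+1 = omega k + k.+1%:R^-1 *: (e_vec R (idx k) - omega k)).

Lemma omega_sum1 k : (1 <= k)%N -> \sum_j omega k j 0 = 1.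
Proof.
elim: k => [//|[_ _|k IH _]]; first exact: omega1_simplex.2.
rewrite omega_rec //; under eq_bigr => j _ do rewrite 3!mxE [(- omega _) _ _]mxE.
by rewrite big_split /= -mulr_sumr sumrB IH // (e_vec_simplex _).2 subrr mulr0 addr0.
Qed.

Lemma scaled_error_rec k : (1 <= k)%N ->
  k.+1%:R *: (omega k.+1 - what) =
  k%:R *: (omega k - what) + (e_vec R (idx k) - what).
Proof.
move=> k_ge1; apply/matrixP => i j; rewrite omega_rec // !mxE.
by field; rewrite addrC natr1 pnatr_eq0.
Qed.

Let dual_gap k :=
  formK K what (omega k - what) - (K *m (omega k - what)) (idx k) 0.

Lemma sqr_scaled_error_rec k : (1 <= k)%N ->
  k.+1%:R ^+ 2 * normK2 K (omega k.+1 - what) =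
  k%:R ^+ 2 * normK2 K (omega k - what) - 2 * (k%:R * dual_gap k)
  + normK2 K (e_vec R (idx k) - what).
Proof.
move=> k_ge1; rewrite -[LHS](normK2Z K_sym) scaled_error_rec // [LHS](normK2D K_sym).
rewrite (normK2Z K_sym) formKZl (formKC K_sym) formKBl formK_e_vec /dual_gap.
ring.
Qed.

Lemma dual_gap_iter_ge k : (1 <= k)%N ->
  ws / L * Num.sqrt (normK2 K (omega k - what)) <= dual_gap k.
Proof.
move=> k_ge1; apply: (dual_gap_ge K_sym K_pos) => //.
- under eq_bigr => j _ do rewrite !mxE.
  by rewrite sumrB omega_sum1 // what_simplex.2 subrr.
- exact: what_simplex.2.
- by move=> j; rewrite -!formK_e_vec; apply: idx_min.
Qed.

Lemma scaled_error_bound k : (1 <= k)%N ->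
  k%:R ^+ 2 * normK2 K (omega k - what) <= 2 * l + (l / (ws / L)) ^+ 2.
Proof.
elim: k => [//|[_ _|k IH _]].
  by rewrite expr1n mul1r (le_trans (normK2_simplex_sub_le K_sym eigenvalue_le l_ge0
    omega1_simplex what_simplex)) // lerDl sqr_ge0.
have k_ge1 : (1 <= k.+1)%N by [].
set q := k.+1%:R * Num.sqrt (normK2 K (omega k.+1 - what)).
have qE : k.+1%:R ^+ 2 * normK2 K (omega k.+1 - what) = q ^+ 2.
  by rewrite exprMn sqr_sqrtr // (normK2_ge0 K_pos).
rewrite sqr_scaled_error_rec // qE; apply: descent_step.
- by rewrite mulr_ge0 ?sqrtr_ge0.
- by rewrite divr_gt0.
- by rewrite /q mulrCA ler_wpM2l // dual_gap_iter_ge.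
- exact: normK2_simplex_sub_le K_sym eigenvalue_le l_ge0 (e_vec_simplex _) what_simplex.
- by rewrite -qE; apply: IH.
Qed.

End VertexDirection.

Theorem lemmaA3 (R : rcfType) (m : nat) (K : 'M[R]_m.+2) (lmax : R)
  (what : 'cV[R]_m.+2) (omega : nat -> 'cV[R]_m.+2) (idx : nat -> 'I_m.+2) :
  sym_posdef K ->
  is_lambda_max K lmax ->
  in_simplex what -> (forall i, 0 < what i 0) ->
  in_simplex (omega 1%N) ->
  (forall n, (1 <= n)%N ->
     forall j : 'I_m.+2,
       ((e_vec R (idx n))^T *m K *m (omega n - what)) 0 0 <=
       ((e_vec R j)^T *m K *m (omega n - what)) 0 0) ->
  (forall n, (1 <= n)%N ->
     omega n.+1 = omega n + (n.+1%:R)^-1 *: (e_vec R (idx n) - omega n)) ->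
  let Rstar := Num.sqrt (lmax * (1 - (m.+2%:R)^-1)) in
  let L := Num.sqrt (max_diag (invmx K)) in
  let alphastar := min_coord what / L in
  forall n, (1 <= n)%N ->
    normK2 K (omega n - what) <=
      4 * Rstar ^+ 2 * (1 + Rstar ^+ 2 / alphastar ^+ 2) / (n%:R ^+ 2).
Proof.
move=> [K_sym K_pos] [_ eigenvalue_le] what_simplex what_gt0 omega1_simplex
  idx_min omega_rec Rstar L alphastar k k_ge1.
have l_gt0 := lambda_max_gt0 K_sym K_pos eigenvalue_le.
have l_le := le_twice_sub_inv m.+2 (ltW l_gt0) isT.
have diag_gt0 : 0 < max_diag (invmx K).
  exact: lt_le_trans (invmx_diag_gt0 K_sym K_pos ord0) (max_diag_ge _ ord0).
have L_gt0 : 0 < L by rewrite sqrtr_gt0.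
have invK_le j : invmx K j j <= L ^+ 2.
  by rewrite /L sqr_sqrtr ?max_diag_ge // ltW.
have bound := scaled_error_bound K_sym K_pos eigenvalue_le (ltW l_gt0) what_simplex
  (min_coord_gt0 what_gt0) (min_coord_le what) L_gt0 invK_le
  omega1_simplex idx_min omega_rec k k_ge1.
rewrite ler_pdivlMr ?exprn_gt0 ?ltr0n // mulrC (le_trans bound) //.
rewrite /Rstar sqr_sqrtr; last first.
  by rewrite -(pmulr_rge0 _ (ltr0Sn _ 1)) (le_trans (ltW l_gt0) l_le).
exact: descent_bound_le (ltW l_gt0) l_le.
Qed.
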